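(* Let $y\in\mathbb{R}^n$, $F\in\mathbb{R}^n$, $Z\in\mathbb{R}^{n\times m}$, and let $\theta=(\theta_1,\dots,\theta_q)^T$ with $\theta_1=\sigma^2>0$, where $\Sigma=\Sigma(\theta_2,\dots,\theta_q)\in\mathbb{R}^{m\times m}$ is a covariance matrix depending differentiably on $\theta_2,\dots,\theta_q$ (and not on $\sigma^2$). Put $C=Z\Sigma Z^T+\sigma^2I_n$. For each $i=1,\dots,n$ let $N(i)\subseteq\{1,\dots,i-1\}$ be a conditioning set, and define $$A_i=\left(Z\Sigma Z^T\right)_{i,N(i)}\left(C_{N(i)}\right)^{-1}\in\mathbb{R}^{1\times|N(i)|},\qquad D_i=C_{i,i}-A_i\left(Z\Sigma Z^T\right)_{N(i),i}.$$ Let $B$ be the $n\times n$ lower triangular matrix with ones on the diagonal, $(B)_{i,N(i)}=-A_i$, and zeros elsewhere, and let $D=\mathrm{diag}(D_1,\dots,D_n)$. Let $$\tilde L(y,F,\theta)=\frac12(y-F)^TB^TD^{-1}B(y-F)+\frac12\sum_{i=1}^n\log D_i+\frac n2\log(2\pi)$$ be the negative log-likelihood of $y\sim\mathcal{N}(F,B^{-1}DB^{-T})$. Then for $1\le k\le q$, $$\frac{\partial \tilde L(y,F,\theta)}{\partial\theta_k}=\frac12\left(2u_k^Tu-u^T\frac{\partial D}{\partial\theta_k}u\right)+\frac12\sum_{i=1}^n\frac1{D_i}\frac{\partial D_i}{\partial\theta_k},$$ where $u=D^{-1}B(y-F)$, $u_k=\frac{\partial B}{\partial\theta_k}(y-F)$,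 and $\frac{\partial B}{\partial\theta_k}$ is lower triangular and $\frac{\partial D}{\partial\theta_k}$ diagonal, with non-zero entries given, for $1<k\le q$, by $$\left(\frac{\partial B}{\partial\theta_k}\right)_{i,N(i)}=-\frac{\partial A_i}{\partial\theta_k}=-\left(Z\frac{\partial\Sigma}{\partial\theta_k}Z^T\right)_{i,N(i)}\left(C_{N(i)}\right)^{-1}+\left(Z\Sigma Z^T\right)_{i,N(i)}\left(C_{N(i)}\right)^{-1}\left(Z\frac{\partial\Sigma}{\partial\theta_k}Z^T\right)_{N(i)}\left(C_{N(i)}\right)^{-1},$$ $$\frac{\partial D_i}{\partial\theta_k}=\left(Z\frac{\partial\Sigma}{\partial\theta_k}Z^T\right)_{i,i}-\frac{\partial A_i}{\partial\theta_k}\left(Z\Sigma Z^T\right)_{N(i),i}-A_i\left(Z\frac{\partial\Sigma}{\partial\theta_k}Z^T\right)_{N(i),i},$$ and, for $k=1$ (i.e. $\theta_1=\sigma^2$), by $$\left(\frac{\partial B}{\partial\sigma^2}\right)_{i,N(i)}=\left(Z\Sigma Z^T\right)_{i,N(i)}\left(C_{N(i)}\right)^{-2},\qquad \frac{\partial D_i}{\partial\sigma^2}=1-\frac{\partial A_i}{\partial\sigma^2}\left(Z\Sigma Z^T\right)_{N(i),i}.$$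
   Context: For a matrix $M$ and index set $N(i)$, $M_{i,N(i)}$ denotes the submatrix with row $i$ and columns $N(i)$, $M_{N(i),i}$ the submatrix with rows $N(i)$ and column $i$, and $M_{N(i)}$ the submatrix with rows and columns $N(i)$. The matrices $B,D$ define the Vecchia approximation $y\approx\mathcal{N}(F,B^{-1}DB^{-T})$ of the Gaussian model $y=F+Zb+\epsilon$, $b\sim\mathcal{N}(0,\Sigma)$, $\epsilon\sim\mathcal{N}(0,\sigma^2I_n)$, obtained by replacing $p(y_i\mid y_1,\dots,y_{i-1})$ by $p(y_i\mid y_{N(i)})$ (in the paper $N(i)$ are nearest-neighbor sets, e.g. the indices of the nearest neighbors of location $s_i$ among $s_1,\dots,s_{i-1}$). Derivatives with respect to $\sigma^2$ are taken with $\Sigma$ held fixed. *)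

From HB Require Import structures.
From mathcomp Require Import all_boot all_order all_algebra.
From mathcomp Require Import all_classical all_reals all_analysis.
Set Implicit Arguments. Unset Strict Implicit. Unset Printing Implicit Defensive.
Import Order.TTheory GRing.Theory Num.Theory.
Import numFieldNormedType.Exports.
Local Open Scope ring_scope.

Section Vecchia.
Variables (R : realType) (n m : nat).

Definition covariance_mx (S : 'M[R]_m) : Prop :=
  S^T = S /\ forall v : 'cV[R]_m, 0 <= (v^T *m S *m v) 0 0.

Definition conditioning_sets (N : 'I_n -> {set 'I_n}) : Prop :=
  forall i j : 'I_n, j \in N i -> (j < i)%N.

Variable N : 'I_n -> {set 'I_n}.

(* enumeration (in increasing order) of N(i) *)
Definition nb (i : 'I_n) : 'I_#|N i| -> 'I_n := fun j => enum_val j.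

Definition row_nb (M : 'M[R]_n) i : 'rV[R]_#|N i| :=
  \row_j M i (nb j).
Definition col_nb (M : 'M[R]_n) i : 'cV[R]_#|N i| :=
  \col_j M (nb j) i.
Definition sub_nb (M : 'M[R]_n) i : 'M[R]_#|N i| :=
  \matrix_(j, l) M (nb j) (nb l).

(* n x n lower triangular matrix with 1 on the diagonal whose (i,N(i))
   block is -a i, and zero elsewhere *)
Definition Bmat (a : forall i : 'I_n, 'rV[R]_#|N i|) : 'M[R]_n :=
  \matrix_(r, c) ((r == c)%:R - \sum_(j < #|N r|) (nb j == c)%:R * a r 0 j).

(* matrix whose (i,N(i)) block is b i, zero elsewhere (used for dB) *)
Definition blockmat (b : forall i : 'I_n, 'rV[R]_#|N i|) : 'M[R]_n :=
  \matrix_(r, c) (\sum_(j < #|N r|) (nb j == c)%:R * b r 0 j).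

Variables (Z : 'M[R]_(n, m)).

Definition Kmat (S : 'M[R]_m) : 'M[R]_n := Z *m S *m Z^T.
Definition Cmat (s2 : R) (S : 'M[R]_m) : 'M[R]_n := Kmat S + s2%:M.

Definition Avec (s2 : R) (S : 'M[R]_m) i : 'rV[R]_#|N i| :=
  row_nb (Kmat S) i *m invmx (sub_nb (Cmat s2 S) i).
Definition Dval (s2 : R) (S : 'M[R]_m) i : R :=
  Cmat s2 S i i - (Avec s2 S i *m col_nb (Kmat S) i) 0 0.
Definition Bvec (s2 : R) (S : 'M[R]_m) : 'M[R]_n := Bmat (Avec s2 S).
Definition Dvec (s2 : R) (S : 'M[R]_m) : 'M[R]_n :=
  diag_mx (\row_i Dval s2 S i).

Definition Ltilde (y F : 'cV[R]_n) (s2 : R) (S : 'M[R]_m) : R :=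
  2^-1 * ((y - F)^T *m (Bvec s2 S)^T *m invmx (Dvec s2 S) *m Bvec s2 S
          *m (y - F)) 0 0
  + 2^-1 * \sum_i ln (Dval s2 S i)
  + n%:R / 2 * ln (2 * pi).

(* derivatives for theta_k with k > 1, given dS = dSigma/dtheta_k *)
Definition dAvec (s2 : R) (S dS : 'M[R]_m) i : 'rV[R]_#|N i| :=
  row_nb (Kmat dS) i *m invmx (sub_nb (Cmat s2 S) i)
  - row_nb (Kmat S) i *m invmx (sub_nb (Cmat s2 S) i)
      *m sub_nb (Kmat dS) i *m invmx (sub_nb (Cmat s2 S) i).
Definition dDval (s2 : R) (S dS : 'M[R]_m) i : R :=
  Kmat dS i i - (dAvec s2 S dS i *m col_nb (Kmat S) i) 0 0
  - (Avec s2 S i *m col_nb (Kmat dS) i) 0 0.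

Definition dBrow_s2 (s2 : R) (S : 'M[R]_m) i : 'rV[R]_#|N i| :=
  row_nb (Kmat S) i *m (invmx (sub_nb (Cmat s2 S) i)) ^+ 2.
Definition dAvec_s2 (s2 : R) (S : 'M[R]_m) i : 'rV[R]_#|N i| :=
  - dBrow_s2 s2 S i.
Definition dDval_s2 (s2 : R) (S : 'M[R]_m) i : R :=
  1 - (dAvec_s2 s2 S i *m col_nb (Kmat S) i) 0 0.

Definition grad_rhs (y F : 'cV[R]_n) (s2 : R) (S : 'M[R]_m)
  (dB : 'M[R]_n) (dDv : 'I_n -> R) : R :=
  let u := invmx (Dvec s2 S) *m Bvec s2 S *m (y - F) in
  let uk := dB *m (y - F) in
  let dD := diag_mx (\row_i dDv i) in
  2^-1 * (2 * (uk^T *m u) 0 0 - (u^T *m dD *m u) 0 0)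
  + 2^-1 * \sum_i (Dval s2 S i)^-1 * dDv i.

End Vecchia.

(* Restricted to the line through theta in a coordinate direction, every
   ingredient of the Vecchia likelihood (C, A_i, D_i, B, D) becomes a
   matrix-valued function of one real variable whose entries are
   differentiable, so the gradient follows from the entrywise product rule and
   d(M^-1) = - M^-1 dM M^-1; along sigma^2 one has dC = I, along theta_k one has
   dC = Z (dSigma/dtheta_k) Z^T.  Inverses and logarithms are legitimate because
   C = Z Sigma Z^T + sigma^2 I is positive definite: so is every C_N(i), and D_i
   is the Schur complement w^T C w > 0 with w = e_i - E_i C_N(i)^-1 C_N(i),i,
   which is nonzero since i is not in N(i). *)

From HB Require Import structures.
From mathcomp Require Import all_boot all_order all_algebra.
From mathcomp Require Import all_classical all_reals all_analysis.
From mathcomp Require Import perm.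
Import Order.TTheory GRing.Theory Num.Theory.
Import numFieldNormedType.Exports.
Local Open Scope ring_scope.

Set Implicit Arguments. Unset Strict Implicit. Unset Printing Implicit Defensive.

Section EntrywiseDerivative.
Variables (R : realType) (x : R).

Lemma is_derive_big_sum (I : Type) (r : seq I) (P : pred I)
    (f : I -> R -> R) (df : I -> R) :
  (forall i, P i -> is_derive x 1 (f i) (df i)) ->
  is_derive x 1 (fun h => \sum_(i <- r | P i) f i h) (\sum_(i <- r | P i) df i).
Proof.
move=> dfP; rewrite -fct_sumE.
apply: (big_ind2 (fun g d => is_derive x 1 g d)) => //.
- exact: is_derive_cst.
- by move=> ? ? ? ? ? ?; apply: is_deriveD.
Qed.

Lemma derivable_big_prod (I : Type) (r : seq I) (P : pred I) (f : I -> R -> R) :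
  (forall i, P i -> derivable (f i) x 1) ->
  derivable (fun h => \prod_(i <- r | P i) f i h) x 1.
Proof.
move=> dfP; rewrite -fct_prodE.
apply: (big_ind (fun g => derivable g x 1)).
- by have := derivable_cst (1 : R) x 1.
- by move=> ? ? ? ?; apply: derivableM.
- exact: dfP.
Qed.

Definition is_derive_mx p r (M : R -> 'M[R]_(p, r)) (dM : 'M[R]_(p, r)) :=
  forall i j, is_derive x 1 (fun h => M h i j) (dM i j).

Lemma is_derive_mx_derivable p r (M : R -> 'M[R]_(p, r)) dM :
  is_derive_mx M dM -> derivable M x 1.
Proof. by move=> dMP; apply/derivable_mxP => i j; case: (dMP i j). Qed.

Lemma is_derive_mxP p r (M : R -> 'M[R]_(p, r)) dM :
  is_derive x 1 M dM <-> is_derive_mx M dM.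
Proof.
split=> [[M_ex <-] i j | dMP].
  by rewrite derive_mx // mxE; apply: derivableP; move/derivable_mxP: M_ex.
have M_ex := is_derive_mx_derivable dMP; apply: DeriveDef => //.
by rewrite derive_mx //; apply/matrixP => i j; rewrite mxE; case: (dMP i j).
Qed.

Lemma is_derive_mx_eq p r (M : R -> 'M[R]_(p, r)) dM dM' :
  is_derive_mx M dM -> dM = dM' -> is_derive_mx M dM'.
Proof. by move=> ? <-. Qed.

Lemma is_derive_mx_cst p r (A : 'M[R]_(p, r)) : is_derive_mx (fun=> A) 0.
Proof. by move=> i j; rewrite mxE; exact: is_derive_cst. Qed.

Lemma is_derive_mxD p r (M N : R -> 'M[R]_(p, r)) dM dN :
  is_derive_mx M dM -> is_derive_mx N dN ->
  is_derive_mx (fun h => M h + N h) (dM + dN).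
Proof.
move=> dMP dNP i j; rewrite mxE; under eq_fun do rewrite mxE.
exact: is_deriveD.
Qed.

Lemma is_derive_mxN p r (M : R -> 'M[R]_(p, r)) dM :
  is_derive_mx M dM -> is_derive_mx (fun h => - M h) (- dM).
Proof.
move=> dMP i j; rewrite mxE; under eq_fun do rewrite mxE.
exact: is_deriveN.
Qed.

Lemma is_derive_mxB p r (M N : R -> 'M[R]_(p, r)) dM dN :
  is_derive_mx M dM -> is_derive_mx N dN ->
  is_derive_mx (fun h => M h - N h) (dM - dN).
Proof. by move=> dMP dNP; apply: is_derive_mxD => //; exact: is_derive_mxN. Qed.

Lemma is_derive_mxM p r t (M : R -> 'M[R]_(p, r)) (N : R -> 'M[R]_(r, t)) dM dN :
  is_derive_mx M dM -> is_derive_mx N dN ->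
  is_derive_mx (fun h => M h *m N h) (M x *m dN + dM *m N x).
Proof.
move=> dMP dNP i j; rewrite !mxE; under eq_fun do rewrite mxE.
rewrite -big_split; apply: is_derive_big_sum => k _ /=.
by rewrite [dM i k * _]mulrC; exact: is_deriveM.
Qed.

Lemma is_derive_mx_tr p r (M : R -> 'M[R]_(p, r)) dM :
  is_derive_mx M dM -> is_derive_mx (fun h => (M h)^T) dM^T.
Proof. by move=> dMP i j; rewrite mxE; under eq_fun do rewrite mxE. Qed.

Lemma is_derive_mx_scalar p (c : R -> R) dc :
  is_derive x 1 c dc -> is_derive_mx (fun h => (c h)%:M : 'M[R]_p) dc%:M.
Proof.
move=> dcP i j; rewrite mxE; under eq_fun do rewrite mxE.
by case: (i == j); rewrite ?mulr1n ?mulr0n //; exact: is_derive_cst.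
Qed.

Lemma is_derive_mxsub p r p' r' (f : 'I_p' -> 'I_p) (g : 'I_r' -> 'I_r)
    (M : R -> 'M[R]_(p, r)) dM :
  is_derive_mx M dM -> is_derive_mx (fun h => mxsub f g (M h)) (mxsub f g dM).
Proof. by move=> dMP i j; rewrite mxE; under eq_fun do rewrite mxE. Qed.

Lemma is_derive_mx_diag p (d : R -> 'rV[R]_p) dd :
  is_derive_mx d dd -> is_derive_mx (fun h => diag_mx (d h)) (diag_mx dd).
Proof.
move=> ddP i j; rewrite mxE; under eq_fun do rewrite mxE.
by case: (i == j); rewrite ?mulr1n ?mulr0n; [exact: ddP | exact: is_derive_cst].
Qed.

Lemma derivable_det p (M : R -> 'M[R]_p) :
  derivable M x 1 -> derivable (fun h => \det (M h)) x 1.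
Proof.
move/derivable_mxP => dMP.
have -> : (fun h => \det (M h)) =
    \sum_(s : 'S_p) fun h => (-1) ^+ s * \prod_i M h i (s i).
  by rewrite fct_sumE.
apply: (big_ind (fun g => derivable g x 1)) => [||s _].
- exact: derivable_cst.
- by move=> ? ? ? ?; apply: derivableD.
- apply: derivableM; first exact: derivable_cst.
  by apply: derivable_big_prod.
Qed.

Lemma near_unitmx p (M : R -> 'M[R]_p) :
  derivable M x 1 -> M x \in unitmx -> \forall h \near x, M h \in unitmx.
Proof.
move=> /derivable_det /derivable1_diffP /differentiable_continuous det_cont Mx_unit.
have : \det (M x) != 0 by rewrite -unitfE -unitmxE.
move/(cvgr_neq0 _ det_cont); apply: filterS => h.
by rewrite unitmxE unitfE.
Qed.

Lemma derivable_invmx p (M : R -> 'M[R]_p) :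
  derivable M x 1 -> M x \in unitmx -> derivable (fun h => invmx (M h)) x 1.
Proof.
move=> dM Mx_unit; apply/derivable_mxP => i j.
apply: (@near_eq_derivable _ _ _ (fun h => (\det (M h))^-1 * \adj (M h) i j)).
  near=> h; rewrite /invmx (_ : M h \in unitmx) ?mxE //.
  by near: h; exact: near_unitmx.
apply: derivableM.
  by apply: derivableV; [rewrite -unitfE -unitmxE | exact: derivable_det].
under eq_fun do rewrite mxE /cofactor.
apply: derivableM; first exact: derivable_cst.
apply/derivable_det/derivable_mxP => a b; under eq_fun do rewrite !mxE.
by move/derivable_mxP: dM; apply.
Unshelve. all: by end_near.
Qed.

Lemma is_derive_mxV p (M : R -> 'M[R]_p) dM :
  is_derive_mx M dM -> M x \in unitmx ->
  is_derive_mx (fun h => invmx (M h)) (- (invmx (M x) *m dM *m invmx (M x))).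
Proof.
move=> dMP Mx_unit; have dM_ex := is_derive_mx_derivable dMP.
pose dMi := \matrix_(i, j) 'D_1 (fun h => invmx (M h) i j) x.
have dMiP : is_derive_mx (fun h => invmx (M h)) dMi.
  move=> i j; rewrite mxE; apply: derivableP.
  by move/derivable_mxP: (derivable_invmx dM_ex Mx_unit); apply.
have MdMi : M x *m dMi + dM *m invmx (M x) = 0.
  apply/matrixP => i j; have [_ <-] := is_derive_mxM dMP dMiP i j.
  rewrite mxE (@near_eq_derive _ _ _ _ (cst ((1%:M : 'M[R]_p) i j))).
    exact: derive_cst.
  near=> h; rewrite /= mulmxV //.
  by near: h; exact: near_unitmx.
suff <- : invmx (M x) *m (M x *m dMi) = - (invmx (M x) *m dM *m invmx (M x)).
  by rewrite mulmxA mulVmx // mul1mx.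
move/eqP: MdMi; rewrite addr_eq0 => /eqP ->.
by rewrite mulmxN mulmxA.
Unshelve. all: by end_near.
Qed.

Lemma is_derive_ln (f : R -> R) df :
  is_derive x 1 f df -> 0 < f x -> is_derive x 1 (fun h => ln (f h)) ((f x)^-1 * df).
Proof. by move=> dfP fx_gt0; exact: (is_derive1_comp (is_derive1_ln fx_gt0) dfP). Qed.

Lemma is_derive_whitened_quad p (r : 'cV[R]_p) (B D : R -> 'M[R]_p) dB dD :
  is_derive_mx B dB -> is_derive_mx D dD -> D x \in unitmx -> (D x)^T = D x ->
  let u := invmx (D x) *m B x *m r in
  is_derive x 1 (fun h => (r^T *m (B h)^T *m invmx (D h) *m B h *m r) 0 0)
    (2 * ((dB *m r)^T *m u) 0 0 - (u^T *m dD *m u) 0 0).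
Proof.
move=> dBP dDP Dx_unit Dx_sym u.
have := is_derive_mxM (is_derive_mxM (is_derive_mxM (is_derive_mxM
  (is_derive_mx_cst r^T) (is_derive_mx_tr dBP)) (is_derive_mxV dDP Dx_unit))
  dBP) (is_derive_mx_cst r) 0 0.
move/is_derive_eq; apply.
set W := invmx (D x).
have W_sym : W^T = W by rewrite /W trmx_inv Dx_sym.
have tr11 (M : 'M[R]_1) : M^T = M by apply/matrixP => a b; rewrite (ord1 a) (ord1 b) mxE.
have addE (M1 M2 : 'M[R]_1) : (M1 + M2) 0 0 = M1 0 0 + M2 0 0 by rewrite mxE.
have oppE (M1 : 'M[R]_1) : (- M1) 0 0 = - M1 0 0 by rewrite mxE.
have uB : r^T *m (B x)^T *m W *m dB *m r = (dB *m r)^T *m u.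
  by rewrite -[LHS]tr11 !trmx_mul !trmxK W_sym /u !mulmxA.
have uBd : r^T *m dB^T *m W *m B x *m r = (dB *m r)^T *m u.
  by rewrite /u trmx_mul !mulmxA.
have udu : r^T *m (B x)^T *m W *m dD *m W *m B x *m r = u^T *m dD *m u.
  by rewrite /u !trmx_mul W_sym !mulmxA.
(* opaque [u], or [mulmxA] would rewrite inside its body *)
clearbody u; rewrite !(mulmx0, mul0mx, addr0, add0r) !mulmxDl mulmxN !mulNmx !mulmxA.
by rewrite uB uBd udu !addE oppE addrCA -mulr2n mulr_natl addrC.
Qed.

End EntrywiseDerivative.

Lemma is_derive_lineP (R : numFieldType) (V W : normedModType R) (f : V -> W) a v d :
  is_derive a v f d <-> is_derive (0 : R) (1 : R) (fun h : R => f (h *: v + a)) d.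
Proof.
have line_derive : 'D_v f a = 'D_(1 : R) (fun h : R => f (h *: v + a)) 0.
  rewrite /derive; set g1 := fun h => h^-1 *: _; set g2 := fun h => h^-1 *: _.
  suff -> : g1 = g2 by [].
  by apply/funext => h; rewrite /g1 /g2 /= addr0 scale0r add0r [_%:A]mulr1.
split=> -[f_ex <-]; (apply: DeriveDef; last by rewrite line_derive).
- exact: (derivable1P _ _ _).1 f_ex.
- exact: (derivable1P _ _ _).2 f_ex.
Qed.

Section PositiveDefinite.
Variable R : realFieldType.

Definition posdef p (A : 'M[R]_p) :=
  forall v : 'cV[R]_p, v != 0 -> 0 < (v^T *m A *m v) 0 0.

Lemma posdef_unitmx p (A : 'M[R]_p) : posdef A -> A \in unitmx.
Proof.
move=> A_pos; rewrite -row_free_unit; apply: inj_row_free => v vA0.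
apply/eqP; rewrite -trmx_eq0; apply: contraT => vT_neq0.
by move: (A_pos _ vT_neq0); rewrite trmxK vA0 mul0mx mxE ltxx.
Qed.

Lemma posdef1 p : posdef (1%:M : 'M[R]_p).
Proof.
move=> v v_neq0.
have -> : (v^T *m 1%:M *m v) 0 0 = \sum_k v k 0 ^+ 2.
  by rewrite mulmx1 mxE; apply: eq_bigr => k _; rewrite mxE expr2.
rewrite lt_def sumr_ge0 ?andbT => [|k _]; last exact: sqr_ge0.
apply: contra v_neq0 => /eqP /(psumr_eq0P (fun k _ => sqr_ge0 _)) sum0.
by apply/eqP/matrixP => i j; rewrite (ord1 j) mxE; apply/eqP; rewrite -sqrf_eq0 sum0.
Qed.

Lemma posdef_add_scalar p (A : 'M[R]_p) (s : R) :
  (forall v : 'cV[R]_p, 0 <= (v^T *m A *m v) 0 0) -> 0 < s -> posdef (A + s%:M).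
Proof.
move=> A_psd s_gt0 v v_neq0.
rewrite mulmxDr mulmxDl mxE mul_mx_scalar -scalemxAl [X in _ + X]mxE.
apply: ltr_wpDl (A_psd v) _; apply: mulr_gt0 s_gt0 _.
by have := posdef1 v_neq0; rewrite mulmx1.
Qed.

Lemma posdef_congruence p r (A : 'M[R]_p) (E : 'M[R]_(p, r)) :
  (forall v : 'cV[R]_r, E *m v = 0 -> v = 0) -> posdef A -> posdef (E^T *m A *m E).
Proof.
move=> E_inj A_pos v v_neq0.
have -> : v^T *m (E^T *m A *m E) *m v = (E *m v)^T *m A *m (E *m v).
  by rewrite trmx_mul !mulmxA.
by apply: A_pos; apply: contra v_neq0 => /eqP /E_inj ->.
Qed.

Lemma schur_complementE p r (A : 'M[R]_p) (E : 'M[R]_(p, r)) (e : 'cV[R]_p) :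
  A^T = A -> E^T *m A *m E \in unitmx ->
  let G := invmx (E^T *m A *m E) in
  let w := e - E *m (G *m (E^T *m A *m e)) in
  w^T *m A *m w = e^T *m A *m e - e^T *m A *m E *m G *m (E^T *m A *m e).
Proof.
move=> A_sym EAE_unit G w.
have G_sym : G^T = G by rewrite /G trmx_inv !trmx_mul trmxK A_sym mulmxA.
set b := E^T *m A *m e; set c := e^T *m A *m E *m G *m b.
have bT : b^T = e^T *m A *m E by rewrite /b !trmx_mul trmxK A_sym mulmxA.
have wT : w^T = e^T - e^T *m A *m E *m G *m E^T.
  by rewrite /w linearB /= trmx_mul (trmx_mul G) G_sym bT.
have c1 : e^T *m A *m (E *m (G *m b)) = c by rewrite /c !mulmxA.
have c2 : e^T *m A *m E *m G *m E^T *m A *m e = c by rewrite /c /b !mulmxA.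
have c3 : e^T *m A *m E *m G *m E^T *m A *m (E *m (G *m b)) = c.
  rewrite (_ : _ *m (E *m (G *m b)) =
      e^T *m A *m E *m (G *m (E^T *m A *m E) *m G) *m b); last by rewrite !mulmxA.
  by rewrite /G mulVmx // mul1mx.
by rewrite wT /w !mulmxBl !mulmxBr c1 c2 c3 subrr subr0.
Qed.

End PositiveDefinite.

Lemma delta_quadE (R : pzSemiRingType) p (M : 'M[R]_p) i :
  ((delta_mx i 0 : 'cV_p)^T *m M *m (delta_mx i 0 : 'cV_p)) 0 0 = M i i.
Proof. by rewrite trmx_delta -rowE -colE !mxE. Qed.

Section VecchiaPositivity.
Variables (R : realType) (n m : nat) (N : 'I_n -> {set 'I_n}) (Z : 'M[R]_(n, m)).
Hypothesis N_lt : conditioning_sets N.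

Definition nb_mx i : 'M[R]_(n, #|N i|) := colsub (@nb n N i) 1%:M.

Lemma sub_nbE (M : 'M[R]_n) i : sub_nb N M i = (nb_mx i)^T *m M *m nb_mx i.
Proof.
rewrite /nb_mx trmx_mxsub trmx1 mul_rowsub_mx mul1mx mulmx_colsub mulmx1.
by apply/matrixP => a b; rewrite !mxE.
Qed.

Lemma row_nbE (M : 'M[R]_n) i :
  row_nb N M i = (delta_mx i 0 : 'cV_n)^T *m M *m nb_mx i.
Proof.
rewrite trmx_delta -rowE /nb_mx mulmx_colsub mulmx1.
by apply/matrixP => a b; rewrite !mxE.
Qed.

Lemma col_nbE (M : 'M[R]_n) i :
  col_nb N M i = (nb_mx i)^T *m M *m delta_mx i 0.
Proof.
rewrite /nb_mx trmx_mxsub trmx1 !mul_rowsub_mx mul1mx -colE.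
by apply/matrixP => a b; rewrite !mxE.
Qed.

Lemma sub_nb1 i : sub_nb N (1%:M : 'M[R]_n) i = 1%:M.
Proof. by apply/matrixP => a b; rewrite !mxE (inj_eq enum_val_inj). Qed.

Lemma nb_mx_inj i (v : 'cV[R]_#|N i|) : nb_mx i *m v = 0 -> v = 0.
Proof. by move=> Ev0; rewrite -[v]mul1mx -(sub_nb1 i) sub_nbE mulmx1 -mulmxA Ev0 mulmx0. Qed.

Lemma nb_neq i (j : 'I_#|N i|) : nb j != i.
Proof. by rewrite neq_ltn N_lt ?enum_valP. Qed.

Lemma row_nb_Cmat s S i : row_nb N (Cmat Z s S) i = row_nb N (Kmat Z S) i.
Proof. by apply/matrixP => a j; rewrite !mxE eq_sym (negbTE (nb_neq j)) mulr0n addr0. Qed.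

Lemma col_nb_Cmat s S i : col_nb N (Cmat Z s S) i = col_nb N (Kmat Z S) i.
Proof. by apply/matrixP => j a; rewrite !mxE (negbTE (nb_neq j)) mulr0n addr0. Qed.

Variables (s : R) (S : 'M[R]_m).
Hypotheses (s_gt0 : 0 < s) (S_cov : covariance_mx S).

Lemma Cmat_sym : (Cmat Z s S)^T = Cmat Z s S.
Proof.
case: S_cov => S_sym _.
by rewrite /Cmat /Kmat linearD /= tr_scalar_mx !trmx_mul trmxK S_sym mulmxA.
Qed.

Lemma Cmat_posdef : posdef (Cmat Z s S).
Proof.
apply: posdef_add_scalar s_gt0 => v; case: S_cov => _ S_psd.
by have := S_psd (Z^T *m v); rewrite trmx_mul trmxK /Kmat !mulmxA.
Qed.

Lemma sub_nb_Cmat_unit i : sub_nb N (Cmat Z s S) i \in unitmx.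
Proof.
rewrite sub_nbE; apply/posdef_unitmx/posdef_congruence; last exact: Cmat_posdef.
exact: nb_mx_inj.
Qed.

Lemma Dval_gt0 i : 0 < Dval N Z s S i.
Proof.
pose C := Cmat Z s S; pose E := nb_mx i; pose e : 'cV[R]_n := delta_mx i 0.
pose w := e - E *m (invmx (E^T *m C *m E) *m (E^T *m C *m e)).
have -> : Dval N Z s S i = (w^T *m C *m w) 0 0.
  rewrite schur_complementE ?Cmat_sym -?sub_nbE ?sub_nb_Cmat_unit //.
  rewrite [RHS]mxE [X in _ + X]mxE delta_quadE -row_nbE -col_nbE.
  by rewrite row_nb_Cmat col_nb_Cmat.
have w_i : w i 0 = 1.
  rewrite !mxE eqxx big1 ?subr0 // => j _.
  by rewrite !mxE eq_sym (negbTE (nb_neq j)) mulr0n mul0r.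
apply: Cmat_posdef; apply: contra_neq (oner_neq0 R) => w0.
by rewrite -w_i w0 mxE.
Qed.

End VecchiaPositivity.

Section BlockMatrices.
Variables (R : realType) (n : nat) (N : 'I_n -> {set 'I_n}).

Lemma eq_blockmat (a b : forall i, 'rV[R]_#|N i|) :
  (forall i, a i = b i) -> blockmat a = blockmat b.
Proof. by move=> ab; apply/matrixP => r c; rewrite !mxE; apply: eq_bigr => j _; rewrite ab. Qed.

Lemma Bmat_blockmat (a : forall i, 'rV[R]_#|N i|) : Bmat a = 1%:M - blockmat a.
Proof. by apply/matrixP => r c; rewrite !mxE. Qed.

Lemma blockmatN (a : forall i, 'rV[R]_#|N i|) :
  blockmat (fun i => - a i) = - blockmat a.
Proof.
apply/matrixP => r c; rewrite !mxE -sumrN.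
by apply: eq_bigr => j _; rewrite mxE mulrN.
Qed.

Lemma is_derive_blockmat (x : R) (a : R -> forall i, 'rV[R]_#|N i|) da :
  (forall i, is_derive_mx x (fun h => a h i) (da i)) ->
  is_derive_mx x (fun h => blockmat (a h)) (blockmat da).
Proof.
move=> daP r c; rewrite mxE; under eq_fun do rewrite mxE.
by apply: is_derive_big_sum => j _; exact: (is_deriveZ _ (daP r 0 j)).
Qed.

Variables (x : R) (M : R -> 'M[R]_n) (dM : 'M[R]_n) (i : 'I_n).
Hypothesis dMP : is_derive_mx x M dM.

Lemma is_derive_row_nb : is_derive_mx x (fun h => row_nb N (M h) i) (row_nb N dM i).
Proof. exact: (is_derive_mxsub (fun=> i) (@nb n N i) dMP). Qed.

Lemma is_derive_col_nb : is_derive_mx x (fun h => col_nb N (M h) i) (col_nb N dM i).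
Proof. exact: (is_derive_mxsub (@nb n N i) (fun=> i) dMP). Qed.

Lemma is_derive_sub_nb : is_derive_mx x (fun h => sub_nb N (M h) i) (sub_nb N dM i).
Proof. exact: (is_derive_mxsub (@nb n N i) (@nb n N i) dMP). Qed.

End BlockMatrices.

Section DerivativeAlongCurve.
Variables (R : realType) (n m : nat) (N : 'I_n -> {set 'I_n}) (Z : 'M[R]_(n, m)).
Variables (x : R) (s : R -> R) (ds : R) (S : R -> 'M[R]_m) (dS : 'M[R]_m).

Definition dAvec_along i : 'rV[R]_#|N i| :=
  let Cinv := invmx (sub_nb N (Cmat Z (s x) (S x)) i) in
  row_nb N (Kmat Z dS) i *m Cinv
  - row_nb N (Kmat Z (S x)) i *m Cinv *m sub_nb N (Cmat Z ds dS) i *m Cinv.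

Definition dDval_along i : R :=
  Cmat Z ds dS i i - (dAvec_along i *m col_nb N (Kmat Z (S x)) i) 0 0
  - (Avec N Z (s x) (S x) i *m col_nb N (Kmat Z dS) i) 0 0.

Hypotheses (N_lt : conditioning_sets N) (s_gt0 : 0 < s x) (S_cov : covariance_mx (S x)).
Hypotheses (s_der : is_derive x 1 s ds) (S_der : is_derive_mx x S dS).

Lemma is_derive_Kmat : is_derive_mx x (fun h => Kmat Z (S h)) (Kmat Z dS).
Proof.
apply: is_derive_mx_eq (is_derive_mxM (is_derive_mxM (is_derive_mx_cst x Z) S_der)
  (is_derive_mx_cst x Z^T)) _.
by rewrite mulmx0 mul0mx !(addr0, add0r).
Qed.

Lemma is_derive_Cmat : is_derive_mx x (fun h => Cmat Z (s h) (S h)) (Cmat Z ds dS).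
Proof. exact: is_derive_mxD is_derive_Kmat (is_derive_mx_scalar s_der). Qed.

Lemma is_derive_Avec i :
  is_derive_mx x (fun h => Avec N Z (s h) (S h) i) (dAvec_along i).
Proof.
have dK := is_derive_row_nb (N := N) (i := i) is_derive_Kmat.
have dC := is_derive_sub_nb (N := N) (i := i) is_derive_Cmat.
have Ci_unit : sub_nb N (Cmat Z (s x) (S x)) i \in unitmx by exact: sub_nb_Cmat_unit.
apply: is_derive_mx_eq (is_derive_mxM dK (is_derive_mxV dC Ci_unit)) _.
by rewrite /dAvec_along mulmxN !mulmxA addrC.
Qed.

Lemma is_derive_Dval i :
  is_derive x 1 (fun h => Dval N Z (s h) (S h) i) (dDval_along i).
Proof.
have dK := is_derive_col_nb (N := N) (i := i) is_derive_Kmat.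
have dAK := is_derive_mxM (is_derive_Avec (i := i)) dK 0 0.
apply: is_derive_eq (is_deriveB (is_derive_Cmat i i) dAK) _.
by rewrite /dDval_along [X in _ - X]mxE opprD addrA addrAC.
Qed.

Lemma is_derive_Bvec :
  is_derive_mx x (fun h => Bvec N Z (s h) (S h)) (blockmat (fun i => - dAvec_along i)).
Proof.
have dA := is_derive_blockmat (a := fun h => Avec N Z (s h) (S h))
  (fun i => is_derive_Avec (i := i)).
have dB := is_derive_mxB (is_derive_mx_cst x (1%:M : 'M[R]_n)) dA.
rewrite /Bvec; under eq_fun do rewrite Bmat_blockmat.
by apply: is_derive_mx_eq dB _; rewrite sub0r blockmatN.
Qed.

Lemma is_derive_Dvec :
  is_derive_mx x (fun h => Dvec N Z (s h) (S h)) (diag_mx (\row_i dDval_along i)).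
Proof.
apply: is_derive_mx_diag => a i; rewrite mxE; under eq_fun do rewrite mxE.
exact: is_derive_Dval.
Qed.

Lemma is_derive_Ltilde (y F : 'cV[R]_n) :
  is_derive x 1 (fun h => Ltilde N Z y F (s h) (S h))
    (grad_rhs N Z y F (s x) (S x) (blockmat (fun i => - dAvec_along i)) dDval_along).
Proof.
have Dvec_unit : Dvec N Z (s x) (S x) \in unitmx.
  rewrite unitmxE det_diag unitfE; apply/prodf_neq0 => i _.
  by rewrite mxE lt0r_neq0 // Dval_gt0.
have Dvec_sym : (Dvec N Z (s x) (S x))^T = Dvec N Z (s x) (S x) by rewrite tr_diag_mx.
have dQ := is_derive_whitened_quad (y - F) is_derive_Bvec is_derive_Dvec Dvec_unit Dvec_sym.
have dlogD : is_derive x 1 (fun h => \sum_i ln (Dval N Z (s h) (S h) i))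
    (\sum_i (Dval N Z (s x) (S x) i)^-1 * dDval_along i).
  apply: is_derive_big_sum => i _.
  by apply: is_derive_ln; [exact: is_derive_Dval | exact: Dval_gt0].
have := is_deriveD (is_deriveD (is_deriveZ 2^-1 dQ) (is_deriveZ 2^-1 dlogD))
  (is_derive_cst (n%:R / 2 * ln (2 * pi)) x 1).
by rewrite addr0.
Qed.

End DerivativeAlongCurve.

Section CoordinateDirections.
Variables (R : realType) (n m : nat) (N : 'I_n -> {set 'I_n}) (Z : 'M[R]_(n, m)).

Lemma Kmat0 : Kmat Z 0 = 0.
Proof. by rewrite /Kmat mulmx0 mul0mx. Qed.

Lemma Cmat_scalar (c : R) : Cmat Z c 0 = c%:M.
Proof. by rewrite /Cmat Kmat0 add0r. Qed.

Lemma Cmat0 (S : 'M[R]_m) : Cmat Z 0 S = Kmat Z S.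
Proof. by rewrite /Cmat raddf0 addr0. Qed.

Lemma row_nb0 i : row_nb N (0 : 'M[R]_n) i = 0.
Proof. by apply/matrixP => a b; rewrite !mxE. Qed.

Lemma col_nb0 i : col_nb N (0 : 'M[R]_n) i = 0.
Proof. by apply/matrixP => a b; rewrite !mxE. Qed.

Lemma dAvec_along_sigma2 (s2 : R) (S : 'M[R]_m) i :
  dAvec_along N Z 0 (fun h => h + s2) 1 (fun=> S) 0 i = dAvec_s2 N Z s2 S i.
Proof.
rewrite /dAvec_along /dAvec_s2 /dBrow_s2 /= add0r Kmat0 row_nb0 Cmat_scalar sub_nb1.
by rewrite mul0mx sub0r mulmx1 expr2 -mulmxE mulmxA.
Qed.

Lemma dDval_along_sigma2 (s2 : R) (S : 'M[R]_m) i :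
  dDval_along N Z 0 (fun h => h + s2) 1 (fun=> S) 0 i = dDval_s2 N Z s2 S i.
Proof.
rewrite /dDval_along dAvec_along_sigma2 /dDval_s2 /= add0r Cmat_scalar Kmat0 col_nb0.
by rewrite mulmx0 mxE eqxx mulr1n [X in _ - X]mxE subr0.
Qed.

Lemma dAvec_along_Sigma (s2 : R) (S : R -> 'M[R]_m) dS i :
  dAvec_along N Z 0 (fun=> s2) 0 S dS i = dAvec N Z s2 (S 0) dS i.
Proof. by rewrite /dAvec_along /dAvec Cmat0. Qed.

Lemma dDval_along_Sigma (s2 : R) (S : R -> 'M[R]_m) dS i :
  dDval_along N Z 0 (fun=> s2) 0 S dS i = dDval N Z s2 (S 0) dS i.
Proof. by rewrite /dDval_along dAvec_along_Sigma /dDval Cmat0. Qed.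

End CoordinateDirections.

Definition theta_tail (R : realType) q (th : 'rV[R]_q.+1) : 'rV[R]_q :=
  \row_j th 0 (lift ord0 j).

Section VecchiaGradient.
Variables (R : realType) (n m q : nat) (N : 'I_n -> {set 'I_n}) (Z : 'M[R]_(n, m)).
Variables (y F : 'cV[R]_n) (Sigma : 'rV[R]_q -> 'M[R]_m) (theta : 'rV[R]_q.+1).
Hypotheses (N_lt : conditioning_sets N) (s2_gt0 : 0 < theta 0 0).
Hypothesis S_cov : covariance_mx (Sigma (theta_tail theta)).

Let L (th : 'rV[R]_q.+1) := Ltilde N Z y F (th 0 0) (Sigma (theta_tail th)).

Lemma is_derive_Ltilde_sigma2 :
  let s2 := theta 0 0 in let S := Sigma (theta_tail theta) in
  is_derive theta (delta_mx 0 ord0) L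
    (grad_rhs N Z y F s2 S (blockmat (dBrow_s2 N Z s2 S)) (dDval_s2 N Z s2 S)).
Proof.
move=> s2 S; apply/is_derive_lineP.
have -> : (fun h => L (h *: delta_mx 0 ord0 + theta)) = fun h => Ltilde N Z y F (h + s2) S.
  apply/funext => h; rewrite /L /S /s2 !mxE eqxx mulr1; congr (Ltilde _ _ _ _ _ (Sigma _)).
  by apply/matrixP => a b; rewrite !mxE mulr0 add0r.
have s_der : is_derive (0 : R) 1 (fun h => h + s2) 1.
  by have := is_deriveD (is_derive_id (0 : R) 1) (is_derive_cst s2 (0 : R) 1); rewrite addr0.
have s_gt0 : 0 < (fun h => h + s2) 0 by rewrite /= add0r.
have := is_derive_Ltilde (x := 0) (s := fun h => h + s2) Z N_lt s_gt0 S_cov s_der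
  (is_derive_mx_cst 0 S) y F.
rewrite /= add0r => /is_derive_eq; apply.
congr grad_rhs; last exact/funext/dDval_along_sigma2.
by apply: eq_blockmat => i; rewrite dAvec_along_sigma2 /dAvec_s2 opprK.
Qed.

Lemma is_derive_Ltilde_Sigma (k : 'I_q) :
  differentiable Sigma (theta_tail theta) ->
  let s2 := theta 0 0 in let S := Sigma (theta_tail theta) in
  let dS := 'D_(delta_mx 0 k) Sigma (theta_tail theta) in
  is_derive theta (delta_mx 0 (lift ord0 k)) L
    (grad_rhs N Z y F s2 S (blockmat (fun i => - dAvec N Z s2 S dS i))
       (dDval N Z s2 S dS)).
Proof.
move=> Sigma_diff s2 S dS; apply/is_derive_lineP.
pose curve h := Sigma (h *: delta_mx 0 k + theta_tail theta).
have -> : (fun h => L (h *: delta_mx 0 (lift ord0 k) + theta)) =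
    fun h => Ltilde N Z y F s2 (curve h).
  apply/funext => h; rewrite /L /s2 /curve !mxE /= mulr0 add0r.
  congr (Ltilde _ _ _ _ _ (Sigma _)); apply/matrixP => a b.
  by rewrite !mxE (inj_eq (@lift_inj _ ord0)) (ord1 a).
have curve0 : curve 0 = S by rewrite /curve scale0r add0r.
have S_der : is_derive_mx 0 curve dS.
  have Sigma_der : is_derive (theta_tail theta) (delta_mx 0 k) Sigma dS.
    by apply: derivableP; exact: diff_derivable.
  by move/is_derive_lineP: Sigma_der => /is_derive_mxP.
(* [curve] is made opaque: unifying [curve 0] with [S] would unfold real arithmetic *)
clearbody curve.
have S_cov0 : covariance_mx (curve 0) by rewrite curve0.
have dA_eq : blockmat (fun i => - dAvec_along N Z 0 (fun=> s2) 0 curve dS i) =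
    blockmat (fun i => - dAvec N Z s2 S dS i).
  by apply: eq_blockmat => i; rewrite dAvec_along_Sigma curve0.
have dD_eq : dDval_along N Z 0 (fun=> s2) 0 curve dS = dDval N Z s2 S dS.
  by apply/funext => i; rewrite dDval_along_Sigma curve0.
have := is_derive_Ltilde (s := fun=> s2) Z N_lt s2_gt0 S_cov0 (is_derive_cst s2 (0 : R) 1)
  S_der y F.
by rewrite curve0 dA_eq dD_eq; apply.
Qed.

End VecchiaGradient.

Unset Implicit Arguments. Set Strict Implicit. Set Printing Implicit Defensive.

Theorem proposition1 (R : realType) (n m q : nat)
  (N : 'I_n -> {set 'I_n}) (Z : 'M[R]_(n, m)) (y F : 'cV[R]_n)
  (Sigma : 'rV[R]_q -> 'M[R]_m) (theta : 'rV[R]_q.+1) :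
  conditioning_sets N ->
  0 < theta 0 0 ->
  let th' := \row_j theta 0 (lift ord0 j) in
  covariance_mx (Sigma th') ->
  differentiable Sigma th' ->
  let L := fun th : 'rV[R]_q.+1 =>
    Ltilde N Z y F (th 0 0) (Sigma (\row_j th 0 (lift ord0 j))) in
  let s2 := theta 0 0 in
  let S := Sigma th' in
  (derivable L theta (delta_mx 0 ord0) /\
   'D_(delta_mx 0 ord0) L theta =
     grad_rhs N Z y F s2 S (blockmat (dBrow_s2 N Z s2 S)) (dDval_s2 N Z s2 S))
  /\
  (forall k : 'I_q,
     let dS := 'D_(delta_mx 0 k) Sigma th' in
     derivable L theta (delta_mx 0 (lift ord0 k)) /\
     'D_(delta_mx 0 (lift ord0 k)) L theta =
       grad_rhs N Z y F s2 S (blockmat (fun i => - dAvec N Z s2 S dS i))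
         (dDval N Z s2 S dS)).
Proof.
move=> N_lt s2_gt0 th' S_cov Sigma_diff L s2 S; split => [|k dS].
  have [L_ex L_D] := is_derive_Ltilde_sigma2 Z y F N_lt s2_gt0 S_cov.
  by split; [exact: L_ex | exact: L_D].
have [L_ex L_D] := is_derive_Ltilde_Sigma Z y F N_lt s2_gt0 S_cov k Sigma_diff.
by split; [exact: L_ex | exact: L_D].
Qed.
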